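(* For all integers $n\ge0$, $nov(n)=\frac12\overline{M}_2(n)$ and $ov(n)=\frac12\overline{M}_2(n)-\overline{M2}_2(n)$.
   Context: An overpartition of $n$ is a partition of $n$ in which the first occurrence of each distinct part may be overlined. $nov(n)$ (resp. $ov(n)$) is the sum, over all overpartitions of $n$, of the non-overlined (resp. overlined) parts. With $(a;q)_\infty=\prod_{j\ge0}(1-aq^j)$, define $\overline{M}(m,n)$, $\overline{M2}(m,n)$ by $\sum_{m,n}\overline{M}(m,n)z^mq^n=\frac{(q^2;q^2)_\infty}{(zq;q)_\infty(q/z;q)_\infty}$ and $\sum_{m,n}\overline{M2}(m,n)z^mq^n=\frac{(-q;q)_\infty(q^2;q^2)_\infty}{(q;q^2)_\infty(zq^2;q^2)_\infty(q^2/z;q^2)_\infty}$ (first and second residual crank counts), and $\overline{M}_2(n)=\sum_m m^2\overline{M}(m,n)$, $\overline{M2}_2(n)=\sum_m m^2\overline{M2}(m,n)$. *)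

From mathcomp Require Import all_boot all_order all_algebra.
Set Implicit Arguments. Unset Strict Implicit. Unset Printing Implicit Defensive.
Import Order.TTheory GRing.Theory Num.Theory.
Local Open Scope ring_scope.

(* An overpartition of n is encoded by its multiplicity data: for each  *)
(* part size i.+1 (i : 'I_n) a multiplicity (f i).1 and a flag (f i).2  *)
(* saying whether the first occurrence of the part i.+1 is overlined    *)
(* (allowed only when the part occurs, i.e. (f i).1 > 0).               *)
Definition ovp_data (n : nat) := {ffun 'I_n -> 'I_n.+1 * bool}.

Definition is_ovp (n : nat) (f : ovp_data n) : bool :=
  ((\sum_(i < n) i.+1 * (f i).1)%N == n) &&
  [forall i, (f i).2 ==> (0 < (f i).1)%N].

Definition nonover_sum (n : nat) (f : ovp_data n) : nat :=
  (\sum_(i < n) i.+1 * ((f i).1 - (f i).2))%N.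

Definition over_sum (n : nat) (f : ovp_data n) : nat :=
  (\sum_(i < n) i.+1 * (f i).2)%N.

Definition nov (n : nat) : nat :=
  (\sum_(f : ovp_data n | is_ovp f) nonover_sum f)%N.

Definition ov (n : nat) : nat :=
  (\sum_(f : ovp_data n | is_ovp f) over_sum f)%N.

(* Formal power series in q whose coefficients are Laurent polynomials  *)
(* in z: a s n m = coefficient of z^m q^n.  All series used below have  *)
(* z-support in [-n, n] at q^n, which is what smul relies on.           *)
Definition series := nat -> int -> int.

Definition sone : series := fun n m => if (n == 0%N) && (m == 0) then 1 else 0.

(* Cauchy product (valid when a has z-support [-i,i] at q^i) *)
Definition smul (a b : series) : series := fun n m =>
  \sum_(i < n.+1) \sum_(k < (2 * i).+1)
     a i (k%:Z - i%:Z) * b (n - i)%N (m - (k%:Z - i%:Z)).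

Definition binom1 (s : int) (k : nat) : series := fun n m =>
  (if (n == 0%N) && (m == 0) then 1 else 0) +
  (if (n == k) && (m == 0) then s else 0).

(* 1 / (1 - z^e q^k) = \sum_(j >= 0) z^(e j) q^(k j),  for k >= 1 *)
Definition geo (e : int) (k : nat) : series := fun n m =>
  if (k %| n)%N && (m == e * (n %/ k)%:Z) then 1 else 0.

Fixpoint sprod (F : nat -> series) (N : nat) : series :=
  match N with
  | 0 => sone
  | N'.+1 => smul (F N) (sprod F N')
  end.

(* infinite product \prod_(k>=1) F k, where the factor F k is 1 + O(q^k):
   the coefficient of q^n only depends on the factors with k <= n. *)
Definition iprod_coef (F : nat -> series) (n : nat) (m : int) : int :=
  sprod F n n m.

(* (q^2;q^2)_oo / ((zq;q)_oo (q/z;q)_oo)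
   = \prod_(k>=1) (1 - q^(2k)) / ((1 - z q^k)(1 - q^k/z)) *)
Definition Mbar_factor (k : nat) : series :=
  smul (binom1 (-1) (2 * k)) (smul (geo 1 k) (geo (-1) k)).

Definition Mbar (m : int) (n : nat) : int := iprod_coef Mbar_factor n m.

(* (-q;q)_oo (q^2;q^2)_oo / ((q;q^2)_oo (zq^2;q^2)_oo (q^2/z;q^2)_oo)
   = \prod_(k>=1) (1+q^k)(1-q^(2k)) /
        ((1 - q^(2k-1)) (1 - z q^(2k)) (1 - q^(2k)/z)) *)
Definition M2bar_factor (k : nat) : series :=
  smul (binom1 1 k)
   (smul (binom1 (-1) (2 * k))
    (smul (geo 0 (2 * k).-1)
     (smul (geo 1 (2 * k)) (geo (-1) (2 * k))))).

Definition M2bar (m : int) (n : nat) : int := iprod_coef M2bar_factor n m.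

(* second moments: the z-support at q^n is contained in [-n, n] *)
Definition Mbar_2 (n : nat) : int :=
  \sum_(k < (2 * n).+1) (k%:Z - n%:Z) ^+ 2 * Mbar (k%:Z - n%:Z) n.

Definition M2bar_2 (n : nat) : int :=
  \sum_(k < (2 * n).+1) (k%:Z - n%:Z) ^+ 2 * M2bar (k%:Z - n%:Z) n.

(* Both sides are read off truncated q-expansions.  The p-th z-moment of a series
   (the value at z = 1 of (z d/dz)^p) obeys the Leibniz rule on Cauchy products, and
   each factor of both products is even in z, so the second moment of the product is
   [prod_k A_k * sum_k M_k / A_k] with A_k, M_k the zeroth and second moments of the
   k-th factor.  With x = q^k these are (1+x)/(1-x) and 2(1+x)/(1-x) * x/(1-x)^2 for
   the first product; for the second one, after discarding the factors 1/(1-q^j) with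
   j > n, x/(1-x)^2 is replaced by x^2/(1-x^2)^2.  On the other side, weighting the
   overpartitions by the sum of their non-overlined (resp. overlined) parts multiplies
   the k-th factor (1+x)/(1-x) of their generating function by k x/(1-x)
   (resp. k x/(1-x) - 2k x^2/(1-x^2)), and sum_k k q^k/(1-q^k) = sum_k q^k/(1-q^k)^2.
   Modulo q^(n+1) the rational functions of x are the finite geometric sums [geom]. *)

From mathcomp Require Import all_boot all_order all_algebra.
From mathcomp Require Import zify ring.
Import Order.TTheory GRing.Theory Num.Theory.
Local Open Scope ring_scope.
Set Implicit Arguments. Unset Strict Implicit. Unset Printing Implicit Defensive.

(** * Truncated polynomials *)

Section Truncation.
Variables (R : comNzRingType) (m : nat).
Implicit Types p q : {poly R}.

Lemma take_polyMl p q : take_poly m (take_poly m p * q) = take_poly m (p * q).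
Proof.
apply/polyP => i; rewrite !coef_take_poly !coefM; case: ifP => // lt_im.
apply: eq_bigr => j _; rewrite coef_take_poly (leq_ltn_trans _ lt_im) //.
by rewrite -ltnS.
Qed.

Lemma take_polyMr p q : take_poly m (p * take_poly m q) = take_poly m (p * q).
Proof. by rewrite mulrC take_polyMl mulrC. Qed.

Lemma take_polyMM p q :
  take_poly m (take_poly m p * take_poly m q) = take_poly m (p * q).
Proof. by rewrite take_polyMl take_polyMr. Qed.

Lemma take_polyM_congr p p' q q' :
  take_poly m p = take_poly m p' -> take_poly m q = take_poly m q' ->
  take_poly m (p * q) = take_poly m (p' * q').
Proof. by move=> Ep Eq; rewrite -take_polyMl Ep take_polyMl -take_polyMr Eq take_polyMr. Qed.

Lemma take_poly_mul0 p q : take_poly m q = 0 -> take_poly m (p * q) = 0.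
Proof. by move=> Eq; rewrite -take_polyMr Eq mulr0 take_poly0r. Qed.

Lemma take_polyMXn_ge k p : (m <= k)%N -> take_poly m (p * 'X^k) = 0.
Proof.
by move=> le_mk; rewrite take_polyMXn (eqP le_mk) take_poly0l mul0r.
Qed.

Lemma take_poly_congr_by p q r :
  p = q + r -> take_poly m r = 0 -> take_poly m p = take_poly m q.
Proof. by move=> -> Er; rewrite take_polyD Er addr0. Qed.

Lemma take_poly_prod_congr (I : Type) (s : seq I) (P : pred I) (F G : I -> {poly R}) :
  (forall i, P i -> take_poly m (F i) = take_poly m (G i)) ->
  take_poly m (\prod_(i <- s | P i) F i) = take_poly m (\prod_(i <- s | P i) G i).
Proof.
move=> EFG; elim: s => [|x s IHs]; first by rewrite !big_nil.
by rewrite !big_cons; case: ifP => // Px; apply: take_polyM_congr => //; apply: EFG.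
Qed.

End Truncation.

(** * Truncated geometric sums *)

Section GeometricSums.
Variable c : nat.
Local Notation x := ('X^c : {poly int}).

Definition geom (m p : nat) : {poly int} := \sum_(s < m) s%:Z ^+ p *: 'X^(c * s).

Lemma geomS m p : geom m.+1 p = geom m p + (m%:Z ^+ p)%:P * 'X^(c * m).
Proof. by rewrite /geom big_ord_recr mul_polyC. Qed.

Lemma expX_mulnS m : 'X^(c * m.+1) = 'X^(c * m) * x :> {poly int}.
Proof. by rewrite mulnS exprD mulrC. Qed.

Lemma mul_geom0 m : (1 - x) * geom m 0 = 1 - 'X^(c * m).
Proof.
elim: m => [|m IHm]; first by rewrite /geom big_ord0 muln0 expr0 mulr0 subrr.
by rewrite geomS mulrDr IHm expX_mulnS expr0 polyC1; ring.
Qed.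

Lemma mul_geom1 m : (1 - x) * geom m 1 = x * geom m 0 - (m%:Z)%:P * 'X^(c * m).
Proof.
elim: m => [|m IHm]; first by rewrite /geom !big_ord0 muln0 !mulr0 mul0r subrr.
rewrite !geomS mulrDr IHm expX_mulnS expr0 polyC1 expr1 -[m.+1]addn1 PoszD polyCD polyC1.
ring.
Qed.

Lemma mul_geom2 m : (1 - x) * geom m 2 =
  2%:R * geom m 1 - geom m 0 + 1 - ((m%:Z - 1) ^+ 2)%:P * 'X^(c * m).
Proof.
elim: m => [|m IHm].
  by rewrite /geom !big_ord0 muln0 mulr0 expr0 sub0r sqrrN expr1n polyC1; ring.
rewrite !geomS mulrDr IHm expX_mulnS expr0 expr1 polyC1 -[m.+1]addn1 PoszD addrK.
rewrite !polyC_exp polyCB polyC1; ring.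
Qed.

Definition geom_defect0 m := (1 - x) * geom m 0 - 1.
Definition geom_defect1 m := (1 - x) * geom m 1 - x * geom m 0.
Definition geom_defect2 m := (1 - x) * geom m 2 - (2%:R * geom m 1 - geom m 0 + 1).

Hypothesis c_gt0 : (0 < c)%N.

Lemma take_poly_tail m q (k : int) : take_poly m (q * (k%:P * 'X^(c * m))) = 0.
Proof. by rewrite mulrA take_polyMXn_ge // leq_pmull. Qed.

Lemma take_poly_defect0 m q : take_poly m (q * geom_defect0 m) = 0.
Proof.
rewrite /geom_defect0 mul_geom0 (_ : _ - 1 = (-1)%:P * 'X^(c * m)); last first.
  by rewrite polyCN polyC1; ring.
exact: take_poly_tail.
Qed.

Lemma take_poly_defect1 m q : take_poly m (q * geom_defect1 m) = 0.
Proof.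
rewrite /geom_defect1 mul_geom1 (_ : _ - _ = (- m%:Z)%:P * 'X^(c * m)); last first.
  by rewrite polyCN; ring.
exact: take_poly_tail.
Qed.

Lemma take_poly_defect2 m q : take_poly m (q * geom_defect2 m) = 0.
Proof.
rewrite /geom_defect2 mul_geom2 (_ : _ - _ = (- (m%:Z - 1) ^+ 2)%:P * 'X^(c * m)).
  exact: take_poly_tail.
by rewrite polyCN; ring.
Qed.

(* Modulo [X^m] the sums [geom m p] are [x/(1-x)^2] (p = 1) and [x(1+x)/(1-x)^3]
   (p = 2), so this is [x(1+x)/(1-x)^4 - x^2/(1-x)^4 = x/(1-x)^4]; the certificate
   writes the left-hand side as a combination of the three defects. *)
Lemma take_poly_geom_moments m :
  take_poly m (geom m 2 * geom m 0 - geom m 1 ^+ 2 - geom m 0 ^+ 2 * geom m 1) = 0.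
Proof.
set g0 := geom m 0; set g1 := geom m 1; set g2 := geom m 2.
set D := g2 * g0 - g1 ^+ 2 - g0 ^+ 2 * g1.
set e0 := geom_defect0 m; set e1 := geom_defect1 m; set e2 := geom_defect2 m.
have -> : D =
  (- D * (2%:R + e0) * (1 + (1 + e0) ^+ 2) + g0 ^+ 4 *
     (2%:R * x - (1 - x) + (1 - x) ^+ 2 * (2%:R * g1 - g0 + 1)
      - x ^+ 2 * (2%:R + e0) - x * (3%:R + 3%:R * e0 + e0 ^+ 2))) * e0
  + (g0 ^+ 4 * (2%:R * (1 - x) - (1 - x) ^+ 2 * (2%:R * x * g0 + e1)
      - (1 - x) * (1 + e0) ^+ 2)) * e1
  + (g0 ^+ 4 * ((1 - x) ^+ 2 * (1 + e0))) * e2.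
  by rewrite /D /e0 /e1 /e2 /g0 /g1 /g2 /geom_defect0 /geom_defect1 /geom_defect2; ring.
by rewrite !take_polyD take_poly_defect0 take_poly_defect1 take_poly_defect2 !addr0.
Qed.

End GeometricSums.

(** * Moments of products *)

Definition z_bounded (a : series) := forall i (k : int), (i < absz k)%N -> a i k = 0.

Definition moment (p : nat) (a : series) (i : nat) : int :=
  \sum_(t < (2 * i).+1) (t%:Z - i%:Z) ^+ p * a i (t%:Z - i%:Z).

Lemma sum_shift (h : int -> int) r d l : (d + l <= r)%N ->
  (forall k : int, k < 0 \/ l%:Z < k -> h k = 0) ->
  \sum_(t < r.+1) h (t%:Z - d%:Z) = \sum_(t < l.+1) h t%:Z.
Proof.
move=> le_dlr h0.
rewrite -(big_mkord xpredT (fun t : nat => h (t%:Z - d%:Z))).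
rewrite -(big_mkord xpredT (fun t : nat => h t%:Z)).
rewrite (big_cat_nat _ (n := d)) //=; last by lia.
rewrite (big_cat_nat _ (m := d) (n := d + l.+1)) //=; try lia.
rewrite big1_seq ?add0r; last first.
  by move=> i /andP[_]; rewrite mem_index_iota => Hi; apply: h0; left; lia.
rewrite [X in _ + X]big1_seq ?addr0; last first.
  by move=> i /andP[_]; rewrite mem_index_iota => Hi; apply: h0; right; lia.
rewrite -{1}[d]add0n big_addn addKn.
by apply: eq_bigr => i _; rewrite PoszD addrK.
Qed.

Lemma weighted_sum_smul (f : int -> int) (a b : series) n : z_bounded b ->
  \sum_(t < (2 * n).+1) f (t%:Z - n%:Z) * smul a b n (t%:Z - n%:Z) =
  \sum_(j < n.+1) \sum_(u < (2 * j).+1) \sum_(v < (2 * (n - j)).+1)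
     a j (u%:Z - j%:Z) * b (n - j)%N (v%:Z - (n - j)%:Z) *
     f ((u%:Z - j%:Z) + (v%:Z - (n - j)%:Z)).
Proof.
move=> bb; rewrite /smul.
under eq_bigr do rewrite mulr_sumr.
rewrite exchange_big /=; apply: eq_bigr => j _.
under eq_bigr do rewrite mulr_sumr.
rewrite exchange_big /=; apply: eq_bigr => u _.
have le_jn : (j <= n)%N by rewrite -ltnS.
pose h (w : int) := a j (u%:Z - j%:Z) * b (n - j)%N (w - (n - j)%:Z) *
                    f ((u%:Z - j%:Z) + (w - (n - j)%:Z)).
transitivity (\sum_(t < (2 * n).+1) h (t%:Z - u%:Z)).
  apply: eq_bigr => t _; rewrite /h.
  have -> : t%:Z - n%:Z - (u%:Z - j%:Z) = t%:Z - u%:Z - (n - j)%N%:Z by lia.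
  have {1}-> : t%:Z - n%:Z = u%:Z - j%:Z + (t%:Z - u%:Z - (n - j)%N%:Z) by lia.
  ring.
rewrite (@sum_shift h (2 * n) u (2 * (n - j))) //.
  by have := ltn_ord u; lia.
by move=> w Hw; rewrite /h bb ?mulr0 ?mul0r //; lia.
Qed.

Lemma moment_smul p (a b : series) n : z_bounded b ->
  moment p (smul a b) n = \sum_(j < n.+1) \sum_(k < p.+1)
     (moment (p - k) a j * moment k b (n - j)) *+ 'C(p, k).
Proof.
move=> bb; rewrite /moment (weighted_sum_smul (fun k => k ^+ p)) //.
apply: eq_bigr => j _.
under eq_bigr do under eq_bigr do rewrite exprDn mulr_sumr.
under eq_bigr do rewrite exchange_big /=.
rewrite exchange_big /=; apply: eq_bigr => k _.
rewrite -mulr_natr mulrAC !big_distrl /=; apply: eq_bigr => u _.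
rewrite mulr_sumr; apply: eq_bigr => v _.
rewrite -mulr_natr; ring.
Qed.

Definition moment_poly m p (a : series) : {poly int} := \poly_(i < m) moment p a i.

Lemma moment_poly_smul m p (a b : series) : z_bounded b ->
  moment_poly m p (smul a b) = take_poly m
    (\sum_(k < p.+1) (moment_poly m (p - k) a * moment_poly m k b) *+ 'C(p, k)).
Proof.
move=> bb; apply/polyP => i; rewrite coef_poly coef_take_poly.
case: ifP => // lt_im; rewrite moment_smul // coef_sum exchange_big /=.
apply: eq_bigr => k _; rewrite coefMn coefM -sumrMnl; apply: eq_bigr => j _.
have lt_jm : (j < m)%N by rewrite (leq_ltn_trans _ lt_im) // -ltnS.
have lt_ijm : (i - j < m)%N by rewrite (leq_ltn_trans (leq_subr _ _) lt_im).
by rewrite !coef_poly lt_jm lt_ijm.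
Qed.

Definition has_moments m (a : series) (P0 P1 P2 : {poly int}) :=
  [/\ moment_poly m 0 a = take_poly m P0, moment_poly m 1 a = take_poly m P1
    & moment_poly m 2 a = take_poly m P2].

Lemma has_moments_smul m (a b : series) A0 A1 A2 B0 B1 B2 : z_bounded b ->
  has_moments m a A0 A1 A2 -> has_moments m b B0 B1 B2 ->
  has_moments m (smul a b) (A0 * B0) (A1 * B0 + A0 * B1)
    (A2 * B0 + 2%:R * (A1 * B1) + A0 * B2).
Proof.
move=> bb [a0 a1 a2] [b0 b1 b2].
split; rewrite moment_poly_smul // !big_ord_recr big_ord0 /= add0r;
  rewrite ?mulr_natl !(subn0, subnn, bin0, binn, mulr1n) ?bin1 -?[(2 - 1)%N]/1%N;
  by rewrite a0 ?a1 ?a2 b0 ?b1 ?b2 ?take_polyD ?raddfMn !take_polyMM.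
Qed.

Lemma z_bounded_smul (a b : series) : z_bounded b -> z_bounded (smul a b).
Proof.
move=> bb n k lt_nk; rewrite /smul big1 // => i _; rewrite big1 // => t _.
by rewrite bb ?mulr0 //; have := ltn_ord i; have := ltn_ord t; lia.
Qed.

Lemma z_bounded_sprod F N : z_bounded (sprod F N).
Proof.
elim: N => [|N IHN] /=; last exact: z_bounded_smul.
by move=> i k lt_ik; rewrite /sone; case: ifP => // /andP[_ /eqP k0]; lia.
Qed.

Lemma z_bounded_geo e k : (absz e <= 1)%N -> z_bounded (geo e k).
Proof.
move=> le_e1 i j lt_ij; rewrite /geo; case: ifP => // /andP[_ /eqP Ej].
by move: lt_ij; rewrite Ej abszM; have := leq_div i k; nia.
Qed.

Lemma moment_point p (a : series) i (k0 : int) : (absz k0 <= i)%N ->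
  (forall k, k != k0 -> a i k = 0) -> moment p a i = k0 ^+ p * a i k0.
Proof.
move=> le_k0i a0; rewrite /moment.
have lt_t : (absz (k0 + i%:Z)%R < (2 * i).+1)%N by lia.
rewrite (bigD1 (Ordinal lt_t)) //= big1 ?addr0.
  by have -> : (absz (k0 + i%:Z)%R)%:Z - i%:Z = k0 by lia.
move=> t /eqP neq_t; rewrite a0 ?mulr0 //; apply/eqP => Et; apply: neq_t.
by apply/val_inj => /=; lia.
Qed.

Lemma moment_poly_binom1 m p s k :
  moment_poly m p (binom1 s k) = take_poly m ((0 ^+ p)%:P * (1 + s%:P * 'X^k)).
Proof.
apply/polyP => i; rewrite coef_poly coef_take_poly; case: ifP => // _.
rewrite (@moment_point _ _ _ 0) //; last first.
  by move=> j /negbTE j0; rewrite /binom1 j0 !andbF addr0.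
rewrite coefCM coefD coef1 coefCM coefXn /binom1 eqxx !andbT.
by case: (i == 0%N); case: (i == k); rewrite ?(mulr1n, mulr1, mulr0, addr0, add0r).
Qed.

Lemma moment_poly_sone m p : moment_poly m p sone = take_poly m (0 ^+ p)%:P.
Proof.
apply/polyP => i; rewrite coef_poly coef_take_poly; case: ifP => // _.
rewrite (@moment_point _ _ _ 0) //; last by move=> j /negbTE j0; rewrite /sone j0 andbF.
by rewrite coefC /sone eqxx andbT; case: (i == 0%N); rewrite ?(mulr1n, mulr1, mulr0).
Qed.

Lemma moment_poly_geo m p e k : (0 < k)%N -> (absz e <= 1)%N ->
  moment_poly m p (geo e k) = take_poly m ((e ^+ p)%:P * geom k m p).
Proof.
move=> k_gt0 le_e1; apply/polyP => i; rewrite coef_poly coef_take_poly.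
case: ifP => // lt_im; rewrite (@moment_point _ _ _ (e * (i %/ k)%:Z)); last 2 first.
- by have := leq_div i k; rewrite abszM; nia.
- by move=> j /negbTE neq_j; rewrite /geo neq_j andbF.
rewrite /geo eqxx andbT coefCM /geom coef_sum exprMn.
under eq_bigr do rewrite coefZ coefXn.
have [dvd_ki | ndvd_ki] := boolP (k %| i)%N.
- have lt_ikm : (i %/ k < m)%N by rewrite (leq_ltn_trans (leq_div _ _)).
  rewrite (bigD1 (Ordinal lt_ikm)) //= big1 ?addr0.
    by rewrite mulnC divnK // eqxx !mulr1.
  move=> s /eqP neq_s; case: eqP => [Ei|]; last by rewrite mulr0.
  by exfalso; apply: neq_s; apply: val_inj; rewrite /= Ei mulKn.
- rewrite mulr0 big1 ?mulr0 // => s _; case: eqP => [Ei|]; last by rewrite mulr0.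
  by move: ndvd_ki; rewrite Ei dvdn_mulr.
Qed.

Lemma has_moments_congr m (a : series) P0 P1 P2 Q0 Q1 Q2 :
  take_poly m P0 = take_poly m Q0 -> take_poly m P1 = take_poly m Q1 ->
  take_poly m P2 = take_poly m Q2 ->
  has_moments m a P0 P1 P2 -> has_moments m a Q0 Q1 Q2.
Proof. by move=> E0 E1 E2 [a0 a1 a2]; split; rewrite -?E0 -?E1 -?E2. Qed.

Lemma has_moments_sone m : has_moments m sone 1 0 0.
Proof. by split; rewrite moment_poly_sone ?expr0 ?expr0n ?polyC1. Qed.

Lemma has_moments_binom1 m s k : has_moments m (binom1 s k) (1 + s%:P * 'X^k) 0 0.
Proof. by split; rewrite moment_poly_binom1 ?expr0 ?expr0n /= ?polyC1 ?mul1r ?mul0r. Qed.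

Lemma has_moments_geo m e k : (0 < k)%N -> (absz e <= 1)%N ->
  has_moments m (geo e k) (geom k m 0) (e%:P * geom k m 1) ((e ^+ 2)%:P * geom k m 2).
Proof. by move=> k_gt0 le_e1; split; rewrite moment_poly_geo ?expr0 ?polyC1 ?mul1r. Qed.

(** * The moments of the two residual crank products *)

Definition ovp_factor m k : {poly int} := (1 + 'X^k) * geom k m 0.

Lemma has_moments_Mbar_factor m k : (0 < k)%N ->
  has_moments m (Mbar_factor k) (ovp_factor m k) 0 (2%:R * (ovp_factor m k * geom k m 1)).
Proof.
move=> k_gt0; have e1 : (absz 1%R <= 1)%N by []; have eN1 : (absz (-1)%R <= 1)%N by [].
have := has_moments_smul (z_bounded_smul _ (z_bounded_geo k eN1))
  (has_moments_binom1 m (-1) (2 * k))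
  (has_moments_smul (z_bounded_geo k eN1) (has_moments_geo m k_gt0 e1)
     (has_moments_geo m k_gt0 eN1)).
have -> : 'X^(2 * k) = 'X^k ^+ 2 :> {poly int} by rewrite mulnC exprM.
rewrite /ovp_factor !(polyCN, polyC1, sqrrN, expr1n, mul1r).
apply: has_moments_congr.
- apply: (take_poly_congr_by (r := (1 + 'X^k) * geom k m 0 * geom_defect0 k m)).
    by rewrite /geom_defect0; ring.
  exact: take_poly_defect0.
- by congr take_poly; ring.
- apply: (take_poly_congr_by (r := 2%:R * (1 - 'X^k ^+ 2) * (geom k m 2 * geom k m 0
     - geom k m 1 ^+ 2 - geom k m 0 ^+ 2 * geom k m 1)
     + 2%:R * (1 + 'X^k) * geom k m 0 * geom k m 1 * geom_defect0 k m)).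
    by rewrite /geom_defect0; ring.
  by rewrite take_polyD take_poly_defect0 // take_poly_mul0 ?take_poly_geom_moments ?add0r.
Qed.

Definition ovp_factor2 m k : {poly int} :=
  (1 + 'X^k) * geom (2 * k).-1 m 0 * geom (2 * k) m 0.

Lemma has_moments_M2bar_factor m k : (0 < k)%N ->
  has_moments m (M2bar_factor k) (ovp_factor2 m k) 0
    (2%:R * (ovp_factor2 m k * geom (2 * k) m 1)).
Proof.
move=> k_gt0; have e0 : (absz 0%R <= 1)%N by [].
have e1 : (absz 1%R <= 1)%N by []; have eN1 : (absz (-1)%R <= 1)%N by [].
have k2_gt0 : (0 < 2 * k)%N by rewrite muln_gt0.
have k1_gt0 : (0 < (2 * k).-1)%N by lia.
have bN1 := z_bounded_geo (2 * k) eN1.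
have := has_moments_smul (z_bounded_smul _ (z_bounded_smul _ (z_bounded_smul _ bN1)))
  (has_moments_binom1 m 1 k)
  (has_moments_smul (z_bounded_smul _ (z_bounded_smul _ bN1))
     (has_moments_binom1 m (-1) (2 * k))
  (has_moments_smul (z_bounded_smul _ bN1) (has_moments_geo m k1_gt0 e0)
  (has_moments_smul bN1 (has_moments_geo m k2_gt0 e1) (has_moments_geo m k2_gt0 eN1)))).
rewrite /ovp_factor2 !(polyCN, polyC1, polyC0, sqrrN, expr1n, mul1r).
apply: has_moments_congr.
- apply: (take_poly_congr_by
    (r := (1 + 'X^k) * geom (2 * k).-1 m 0 * geom (2 * k) m 0 * geom_defect0 (2 * k) m)).
    by rewrite /geom_defect0; ring.
  exact: take_poly_defect0.
- by congr take_poly; ring.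
- apply: (take_poly_congr_by (r := 2%:R * (1 + 'X^k) * geom (2 * k).-1 m 0 *
     (1 - 'X^(2 * k)) * (geom (2 * k) m 2 * geom (2 * k) m 0 - geom (2 * k) m 1 ^+ 2
       - geom (2 * k) m 0 ^+ 2 * geom (2 * k) m 1)
     + 2%:R * (1 + 'X^k) * geom (2 * k).-1 m 0 * geom (2 * k) m 0 * geom (2 * k) m 1
       * geom_defect0 (2 * k) m)).
    by rewrite /geom_defect0; ring.
  by rewrite take_polyD take_poly_defect0 // take_poly_mul0 ?take_poly_geom_moments ?add0r.
Qed.

Lemma has_moments_sprod m F (A H : nat -> {poly int}) N :
  (forall k, (0 < k)%N -> has_moments m (F k) (A k) 0 (2%:R * (A k * H k))) ->
  has_moments m (sprod F N) (\prod_(k < N) A k.+1) 0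
    (2%:R * (\prod_(k < N) A k.+1 * \sum_(k < N) H k.+1)).
Proof.
move=> hmF; elim: N => [|N IHN]; first by rewrite !big_ord0 !mulr0; exact: has_moments_sone.
have := has_moments_smul (z_bounded_sprod F N) (hmF N.+1 (ltn0Sn N)) IHN.
by apply: has_moments_congr; congr take_poly; rewrite ?big_ord_recr /=; ring.
Qed.

Lemma take_poly_geom_ge m k : (m <= k)%N -> take_poly m (geom k m 0) = take_poly m 1.
Proof.
move=> le_mk; rewrite /geom; case: m le_mk => [|m] le_mk.
  by rewrite !take_poly0l.
rewrite big_ord_recl muln0 expr0 scale1r take_polyD take_poly_sum big1 ?addr0 //.
move=> s _; rewrite take_polyZ -['X^_]mul1r take_polyMXn_ge ?scaler0 //.
by rewrite lift0; nia.
Qed.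

Lemma prod_pairs (R : comNzRingType) (f : nat -> R) N :
  \prod_(k < N) (f (2 * k).+1 * f (2 * k).+2) = \prod_(j < 2 * N) f j.+1.
Proof.
elim: N => [|N IHN]; first by rewrite !big_ord0.
have -> : (2 * N.+1 = (2 * N).+2)%N by lia.
by rewrite !big_ord_recr IHN /= mulrA.
Qed.

(* The denominators [(1 - q^(2k-1)) (1 - q^(2k))] of [ovp_factor2] run through all
   [1 - q^j] with [j <= 2N]; those with [j > N] are invisible modulo [X^(N+1)]. *)
Lemma take_poly_prod_ovp_factor2 m N : (m <= N.+1)%N ->
  take_poly m (\prod_(k < N) ovp_factor2 m k.+1) =
  take_poly m (\prod_(k < N) ovp_factor m k.+1).
Proof.
move=> le_mN.
have -> : \prod_(k < N) ovp_factor2 m k.+1 =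
    (\prod_(k < N) ovp_factor m k.+1) * \prod_(j < N) geom (N + j).+1 m 0.
  rewrite /ovp_factor2 /ovp_factor.
  have E k : (2 * k.+1).-1 = (2 * k).+1 /\ (2 * k.+1 = (2 * k).+2)%N by lia.
  under eq_bigr => k _ do rewrite -mulrA (proj1 (E k)) (proj2 (E k)).
  rewrite big_split /= (prod_pairs (fun j => geom j m 0)) mul2n -addnn big_split_ord /=.
  by rewrite big_split /= mulrA.
rewrite -take_polyMr (@take_poly_prod_congr _ m _ _ _ _ (fun _ => 1)); last first.
  by move=> j _; apply: take_poly_geom_ge; lia.
by rewrite big1_eq take_polyMr mulr1.
Qed.

Lemma coef_moment_poly m p a i : (i < m)%N -> (moment_poly m p a)`_i = moment p a i.
Proof. by move=> lt_im; rewrite coef_poly lt_im. Qed.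

Lemma Mbar_2E n : Mbar_2 n =
  (2%:R * (\prod_(k < n) ovp_factor n.+1 k.+1 * \sum_(k < n) geom k.+1 n.+1 1))`_n.
Proof.
have [_ _ E] := has_moments_sprod n (@has_moments_Mbar_factor n.+1).
have -> : Mbar_2 n = (moment_poly n.+1 2 (sprod Mbar_factor n))`_n.
  by rewrite coef_moment_poly.
by rewrite E coef_take_poly ltnSn.
Qed.

Lemma M2bar_2E n : M2bar_2 n =
  (2%:R * (\prod_(k < n) ovp_factor n.+1 k.+1 * \sum_(k < n) geom (2 * k.+1) n.+1 1))`_n.
Proof.
have [_ _ E] := has_moments_sprod n (@has_moments_M2bar_factor n.+1).
have -> : M2bar_2 n = (moment_poly n.+1 2 (sprod M2bar_factor n))`_n.
  by rewrite coef_moment_poly.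
rewrite E coef_take_poly ltnSn.
have : take_poly n.+1 (\prod_(k < n) ovp_factor2 n.+1 k.+1 * \sum_(k < n) geom (2 * k.+1) n.+1 1)
     = take_poly n.+1 (\prod_(k < n) ovp_factor n.+1 k.+1 * \sum_(k < n) geom (2 * k.+1) n.+1 1).
  by apply: take_polyM_congr => //; apply: take_poly_prod_ovp_factor2.
move=> /(congr1 (fun p : {poly int} => p`_n)).
by rewrite !coef_take_poly ltnSn !mulr_natl !coefMn => ->.
Qed.

(** * Weighted counts of overpartitions *)

Definition ovp_monomial n (j : 'I_n) (x : 'I_n.+1 * bool) : {poly int} :=
  if x.2 ==> (0 < x.1)%N then 'X^(j.+1 * x.1) else 0.

Lemma coef_prod_ovp_monomial n (f : ovp_data n) :
  (\prod_j ovp_monomial j (f j))`_n = (is_ovp f)%:R.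
Proof.
rewrite /is_ovp; have [valid_f | /forallPn[i invalid_i]] := boolP [forall i, (f i).2 ==> (0 < (f i).1)%N].
  under eq_bigr => j _ do rewrite /ovp_monomial (forallP valid_f j).
  by rewrite andbT prodrXr coefXn eq_sym.
by rewrite andbF (bigD1 i) //= /ovp_monomial (negbTE invalid_i) mul0r coef0.
Qed.

(* Expanding the product over part sizes: choosing the weighted factor at [i]
   marks the summand [w i (f i)] of the overpartition [f]. *)
Lemma sum_ovp_weight n (w : 'I_n -> 'I_n.+1 * bool -> int) :
  \sum_(f : ovp_data n | is_ovp f) \sum_j w j (f j) =
  (\sum_i (\sum_x w i x *: ovp_monomial i x) *
     \prod_(j | j != i) \sum_x ovp_monomial j x)`_n.
Proof.
pose F i j x := if j == i then w i x *: ovp_monomial j x else ovp_monomial j x.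
have expand i : (\sum_x w i x *: ovp_monomial i x) *
    \prod_(j | j != i) \sum_x ovp_monomial j x = \prod_j \sum_x F i j x.
  rewrite [RHS](bigD1 i) //= /F eqxx; congr (_ * _).
  by apply: eq_bigr => j /negbTE ->.
have select i (f : ovp_data n) :
    \prod_j F i j (f j) = w i (f i) *: \prod_j ovp_monomial j (f j).
  rewrite (bigD1 i) //= [in RHS](bigD1 i) //= /F eqxx -scalerAl.
  by congr (_ *: (_ * _)); apply: eq_bigr => j /negbTE ->.
under [in RHS]eq_bigr do rewrite expand bigA_distr_bigA /=.
under [in RHS]eq_bigr do under eq_bigr do rewrite select.
rewrite [in RHS]exchange_big coef_sum big_mkcond /=; apply: eq_bigr => f _.
by rewrite -scaler_suml coefZ coef_prod_ovp_monomial; case: is_ovp; rewrite ?mulr1 ?mulr0.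
Qed.

Lemma sum_ovp_monomial_weighted n (j : 'I_n) (w : 'I_n.+1 * bool -> int) :
  \sum_x w x *: ovp_monomial j x =
  \sum_(s < n.+1) (w (s, true) * (0 < s)%N%:R + w (s, false)) *: 'X^(j.+1 * s).
Proof.
transitivity (\sum_(x : 'I_n.+1 * bool) w (x.1, x.2) *: ovp_monomial j (x.1, x.2)).
  by apply: eq_bigr => -[].
rewrite -(pair_bigA _ (fun s b => w (s, b) *: ovp_monomial j (s, b))) /=.
apply: eq_bigr => s _; rewrite big_bool /ovp_monomial /= scalerDl.
by case: (posnP s) => [-> | s_gt0]; rewrite ?(mulr0, mulr1, scale0r, scaler0, add0r).
Qed.

Lemma sum_affine_geom (c m : nat) (a b d : int) :
  \sum_(s < m.+1) (a + b * s%:Z + d * (s == 0 :> nat)%:R) *: 'X^(c * s) =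
  a%:P * geom c m.+1 0 + b%:P * geom c m.+1 1 + d%:P.
Proof.
under eq_bigr do rewrite scalerDl.
rewrite big_split /=; congr (_ + _).
  rewrite /geom !mulr_sumr -big_split /=; apply: eq_bigr => s _.
  by rewrite !mul_polyC !scalerA expr0 expr1 mulr1 -scalerDl.
rewrite big_ord_recl /= mulr1 muln0 expr0 alg_polyC big1 ?addr0 // => s _.
by rewrite mulr0 scale0r.
Qed.

Lemma sum_ovp_monomial_affine n (j : 'I_n) (w : 'I_n.+1 * bool -> int) (a b d : int) :
  (forall s : 'I_n.+1, w (s, true) * (0 < s)%N%:R + w (s, false) =
     a + b * s%:Z + d * (s == 0 :> nat)%:R) ->
  \sum_x w x *: ovp_monomial j x =
  a%:P * geom j.+1 n.+1 0 + b%:P * geom j.+1 n.+1 1 + d%:P.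
Proof.
by move=> Ew; rewrite sum_ovp_monomial_weighted -sum_affine_geom; apply: eq_bigr => s _; rewrite Ew.
Qed.

Lemma sum_ovp_monomial n (j : 'I_n) :
  \sum_x ovp_monomial j x = 2%:R * geom j.+1 n.+1 0 - 1.
Proof.
rewrite -(eq_bigr _ (fun x _ => scale1r (ovp_monomial j x))).
rewrite (@sum_ovp_monomial_affine _ _ _ 2 0 (-1)); last first.
  by case=> -[|s] ? /=; rewrite ?mulr1 ?mulr0 ?addr0.
by rewrite polyC0 polyCN polyC1 polyC_natr; ring.
Qed.

Lemma sum_ovp_monomial_nonover n (j : 'I_n) :
  \sum_(x : 'I_n.+1 * bool) (j.+1 * (x.1 - x.2))%N%:Z *: ovp_monomial j x =
  (j.+1%:Z)%:P * (2%:R * geom j.+1 n.+1 1 - geom j.+1 n.+1 0 + 1).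
Proof.
rewrite (@sum_ovp_monomial_affine _ _ _ (- j.+1%:Z) (2 * j.+1%:Z) j.+1%:Z); last first.
  by case=> -[|s] ? /=; rewrite ?mulr1 ?mulr0 ?addr0; lia.
by rewrite polyCN polyCM polyC_natr; ring.
Qed.

Lemma sum_ovp_monomial_over n (j : 'I_n) :
  \sum_(x : 'I_n.+1 * bool) (j.+1 * x.2)%N%:Z *: ovp_monomial j x =
  (j.+1%:Z)%:P * (geom j.+1 n.+1 0 - 1).
Proof.
rewrite (@sum_ovp_monomial_affine _ _ _ j.+1%:Z 0 (- j.+1%:Z)); last first.
  by case=> -[|s] ? /=; rewrite ?mulr1 ?mulr0 ?addr0; lia.
by rewrite polyC0 polyCN; ring.
Qed.

Lemma take_poly_sum_ovp_monomial n (j : 'I_n) :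
  take_poly n.+1 (\sum_x ovp_monomial j x) = take_poly n.+1 (ovp_factor n.+1 j.+1).
Proof.
rewrite sum_ovp_monomial.
apply: (take_poly_congr_by (r := 1 * geom_defect0 j.+1 n.+1)).
  by rewrite /ovp_factor /geom_defect0; ring.
exact: take_poly_defect0.
Qed.

Lemma take_poly_sum_ovp_monomial_nonover n (j : 'I_n) :
  take_poly n.+1 (\sum_(x : 'I_n.+1 * bool) (j.+1 * (x.1 - x.2))%N%:Z *: ovp_monomial j x) =
  take_poly n.+1 (ovp_factor n.+1 j.+1 * ((j.+1%:Z)%:P * (geom j.+1 n.+1 0 - 1))).
Proof.
rewrite sum_ovp_monomial_nonover /ovp_factor.
set c := j.+1; set x : {poly int} := 'X^c; set g0 := geom c n.+1 0; set g1 := geom c n.+1 1.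
set e0 := geom_defect0 c n.+1; set e1 := geom_defect1 c n.+1.
set T := 2%:R * g1 - g0 + 1 - (1 + x) * g0 * (g0 - 1).
apply: (take_poly_congr_by (r := (c%:Z)%:P * (- T * (2%:R + e0) + g0 ^+ 2 *
     (2%:R * x - (1 - x) - (1 + x) * (2%:R + e0) + (1 + x) * (1 - x))) * e0
   + (c%:Z)%:P * (g0 ^+ 2 * (2%:R * (1 - x))) * e1)).
  by rewrite /T /e0 /e1 /geom_defect0 /geom_defect1 /x /g0 /g1; ring.
by rewrite take_polyD !take_poly_defect0 ?take_poly_defect1 ?addr0.
Qed.

Lemma take_poly_sum_ovp_monomial_over n (j : 'I_n) :
  take_poly n.+1 (\sum_(x : 'I_n.+1 * bool) (j.+1 * x.2)%N%:Z *: ovp_monomial j x) =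
  take_poly n.+1 (ovp_factor n.+1 j.+1 * ((j.+1%:Z)%:P * (geom j.+1 n.+1 0 - 1)
     - 2%:R * ((j.+1%:Z)%:P * (geom (2 * j.+1) n.+1 0 - 1)))).
Proof.
rewrite sum_ovp_monomial_over /ovp_factor.
set c := j.+1; set x : {poly int} := 'X^c; set g0 := geom c n.+1 0.
set h0 := geom (2 * c) n.+1 0.
set e0 := geom_defect0 c n.+1; set f0 := geom_defect0 (2 * c) n.+1.
have x2 : 'X^(2 * c) = x ^+ 2 by rewrite /x mulnC exprM.
set T := (g0 - 1) - (1 + x) * g0 * (g0 - 2%:R * h0 + 1).
set u := 1 - x; set v := 1 - x ^+ 2.
apply: (take_poly_congr_by (r := (c%:Z)%:P * (- T * (2%:R + e0) * (1 + f0) + g0 ^+ 2 * h0 *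
     (u * v - (1 + x) * ((2%:R + e0) * v - 2%:R * u * (1 + f0) + u * v))) * e0
   + (c%:Z)%:P * (- T + g0 ^+ 2 * h0 * (2%:R * u * (1 + x))) * f0)).
  by rewrite /T /u /v /e0 /f0 /geom_defect0 x2 /x /g0 /h0; ring.
by rewrite take_polyD !take_poly_defect0 ?addr0 // muln_gt0.
Qed.

Lemma geom_behead c n p : geom c n.+1 p = (0 ^+ p)%:P + \sum_(s < n) s.+1%:Z ^+ p *: 'X^(c * s.+1).
Proof. by rewrite /geom big_ord_recl muln0 expr0 -alg_polyC. Qed.

(* Both sides are [sum_(1 <= i, s <= n) i q^(d i s)], with the roles of [i] and [s] swapped. *)
Lemma sum_geom_swap n d :
  \sum_(i < n) (i.+1%:Z)%:P * (geom (d * i.+1) n.+1 0 - 1) =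
  \sum_(i < n) geom (d * i.+1) n.+1 1.
Proof.
under eq_bigr do rewrite geom_behead expr0 polyC1 addrC addKr mulr_sumr.
under [RHS]eq_bigr do rewrite geom_behead expr0n polyC0 add0r.
rewrite exchange_big /=; apply: eq_bigr => s _; apply: eq_bigr => i _.
by rewrite expr0 expr1 scale1r mul_polyC mulnAC.
Qed.

Lemma sum_geom_swap1 n :
  \sum_(i < n) (i.+1%:Z)%:P * (geom i.+1 n.+1 0 - 1) = \sum_(i < n) geom i.+1 n.+1 1.
Proof.
have := sum_geom_swap n 1.
by under eq_bigr do rewrite mul1n; under [in RHS]eq_bigr do rewrite mul1n.
Qed.

Lemma sum_ovp_weight_gf n (w : 'I_n -> 'I_n.+1 * bool -> int) (K : nat -> {poly int}) :
  (forall j : 'I_n, take_poly n.+1 (\sum_x w j x *: ovp_monomial j x) =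
     take_poly n.+1 (ovp_factor n.+1 j.+1 * K j.+1)) ->
  \sum_(f : ovp_data n | is_ovp f) \sum_j w j (f j) =
  (\prod_(k < n) ovp_factor n.+1 k.+1 * \sum_(k < n) K k.+1)`_n.
Proof.
move=> Ew; have coefT p : (take_poly n.+1 p)`_n = p`_n by rewrite coef_take_poly ltnSn.
rewrite sum_ovp_weight -coefT -[RHS]coefT mulr_sumr !take_poly_sum.
apply: (congr1 (fun p : {poly int} => p`_n)); apply: eq_bigr => i _.
rewrite (take_polyM_congr (Ew i)
  (@take_poly_prod_congr _ n.+1 _ _ _ _ (fun j : 'I_n => ovp_factor n.+1 j.+1) _)).
  by rewrite [in RHS](bigD1 i) //=; congr take_poly; ring.
by move=> j _; apply: take_poly_sum_ovp_monomial.
Qed.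

Lemma Mbar_2_nov n : Mbar_2 n = 2%:R * (nov n)%:Z.
Proof.
have -> : (nov n)%:Z = \sum_(f : ovp_data n | is_ovp f) \sum_(j : 'I_n) (j.+1 * ((f j).1 - (f j).2))%N%:Z.
  rewrite /nov /nonover_sum -natz natr_sum; apply: eq_bigr => f _.
  by rewrite natr_sum; apply: eq_bigr => j _; rewrite natz.
have /= -> := @sum_ovp_weight_gf n _ (fun c => (c%:Z)%:P * (geom c n.+1 0 - 1))
  (@take_poly_sum_ovp_monomial_nonover n).
by rewrite sum_geom_swap1 Mbar_2E !mulr_natl coefMn.
Qed.

Lemma Mbar_2_M2bar_2_ov n : Mbar_2 n - 2%:R * M2bar_2 n = 2%:R * (ov n)%:Z.
Proof.
have -> : (ov n)%:Z = \sum_(f : ovp_data n | is_ovp f) \sum_(j : 'I_n) (j.+1 * (f j).2)%N%:Z.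
  rewrite /ov /over_sum -natz natr_sum; apply: eq_bigr => f _.
  by rewrite natr_sum; apply: eq_bigr => j _; rewrite natz.
have /= -> := @sum_ovp_weight_gf n _ (fun c => (c%:Z)%:P * (geom c n.+1 0 - 1)
    - 2%:R * ((c%:Z)%:P * (geom (2 * c) n.+1 0 - 1)))
  (@take_poly_sum_ovp_monomial_over n).
rewrite sumrB -mulr_sumr sum_geom_swap1 sum_geom_swap Mbar_2E M2bar_2E mulrBr.
by rewrite !mulr_natl !mulrnAr coefB !coefMn mulrnBl.
Qed.

Theorem proposition4p1 (n : nat) :
  ((nov n)%:R = (Mbar_2 n)%:~R / 2 :> rat) /\
  ((ov n)%:R = (Mbar_2 n)%:~R / 2 - (M2bar_2 n)%:~R :> rat).
Proof.
have nov_eq := Mbar_2_nov n.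
have ov_eq : Mbar_2 n = 2%:R * M2bar_2 n + 2%:R * (ov n)%:Z.
  by rewrite -Mbar_2_M2bar_2_ov addrC subrK.
by split; [rewrite nov_eq | rewrite ov_eq]; rewrite ?rmorphD !rmorphM /= !rmorph_nat; field.
Qed.
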